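(* Let $A\in\mathbb{R}^{n\times n}$, $\vec{x}_0\in\mathbb{R}^n$, and $\vec{x}_{t+1}=A\vec{x}_t$ for $t=0,1,2,\ldots$. For $j\ge 0$ let $X_j=[\vec{x}_0\ \vec{x}_1\ \cdots\ \vec{x}_j]\in\mathbb{R}^{n\times(j+1)}$ and $Y_j=[\vec{x}_1\ \vec{x}_2\ \cdots\ \vec{x}_{j+1}]$, and let $\hat{A}_j=Y_jX_j^{\dagger}$. Let $k$ be an integer with $1\le k<n$. Let $U_{k-1}$ be the matrix whose columns are the left singular vectors of $X_{k-1}$ corresponding to its nonzero singular values (economic SVD), so that $X_{k-1}X_{k-1}^{\dagger}=U_{k-1}U_{k-1}^\top$, and define $$S_k=I-U_{k-1}U_{k-1}^\top,\qquad P_k=\vec{x}_k\vec{x}_k^\top=A^k\vec{x}_0\vec{x}_0^\top (A^k)^\top .$$ Assume $\mathrm{Tr}(S_kP_k)\neq 0$. Then $\hat{A}_k=A(I-E_k)$, where $$E_k=\left(I-\frac{S_kP_k}{\mathrm{Tr}(S_kP_k)}\right)S_k,$$ and moreover $$\|E_k\|_2\le\left\|I-\frac{S_kP_k}{\mathrm{Tr}(S_kP_k)}\right\|_2 .$$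
   Context: $M^{\dagger}$ denotes the Moore–Penrose pseudo-inverse of $M$; $\hat{A}_j$ is the least-squares solution of $\min_A\|Y_j-AX_j\|_F$. $\|\cdot\|_2$ is the spectral norm and $\mathrm{Tr}$ the trace. $I$ is the $n\times n$ identity. *)

From HB Require Import structures.
From mathcomp Require Import all_boot all_order all_algebra.
From mathcomp Require Import boolp classical_sets reals.
Set Implicit Arguments. Unset Strict Implicit. Unset Printing Implicit Defensive.
Import Order.TTheory GRing.Theory Num.Theory.
Local Open Scope ring_scope.
Local Open Scope classical_set_scope.

Definition traj (R : pzRingType) (n : nat) (A : 'M[R]_n) (x0 : 'cV[R]_n) (t : nat)
  : 'cV[R]_n := A ^+ t *m x0.

Definition Xmat (R : pzRingType) (n : nat) (A : 'M[R]_n) (x0 : 'cV[R]_n) (j : nat)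
  : 'M[R]_(n, j.+1) := \matrix_(i < n, t < j.+1) traj A x0 t i 0.
Definition Ymat (R : pzRingType) (n : nat) (A : 'M[R]_n) (x0 : 'cV[R]_n) (j : nat)
  : 'M[R]_(n, j.+1) := \matrix_(i < n, t < j.+1) traj A x0 t.+1 i 0.

(* P is the Moore-Penrose pseudo-inverse of M (the four Penrose equations;
   over the reals the conjugate transpose is the transpose). *)
Definition is_MP_pinv (R : pzRingType) (m n : nat) (M : 'M[R]_(m, n)) (P : 'M[R]_(n, m))
  : Prop :=
  [/\ M *m P *m M = M, P *m M *m P = P,
      (M *m P)^T = M *m P & (P *m M)^T = P *m M].

Definition econ_svd (R : numDomainType) (m n r : nat) (M : 'M[R]_(m, n))
  (U : 'M[R]_(m, r)) (sigma : 'rV[R]_r) (V : 'M[R]_(n, r)) : Prop :=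
  [/\ M = U *m diag_mx sigma *m V^T, U^T *m U = 1%:M, V^T *m V = 1%:M
    & forall i, 0 < sigma 0 i].

Definition norm2 (R : realType) (n : nat) (v : 'cV[R]_n) : R :=
  Num.sqrt (\sum_(i < n) v i 0 ^+ 2).

Definition spec_norm (R : realType) (m n : nat) (M : 'M[R]_(m, n)) : R :=
  sup [set norm2 (M *m v) | v in [set v : 'cV[R]_n | norm2 v <= 1]].

From HB Require Import structures.
From mathcomp Require Import all_boot all_order all_algebra.
From mathcomp Require Import boolp classical_sets reals.
Set Implicit Arguments. Unset Strict Implicit. Unset Printing Implicit Defensive.
Import Order.TTheory GRing.Theory Num.Theory.
Local Open Scope ring_scope.

(* X_k X_k^+ is the orthogonal projector onto the span of x_0, ..., x_k.
   Since U_{k-1} U_{k-1}^T projects onto the span of x_0, ..., x_{k-1} and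
   S_k = I - U_{k-1} U_{k-1}^T onto its orthogonal complement, one Gram-Schmidt
   step gives X_k X_k^+ = U_{k-1} U_{k-1}^T + (S_k x_k)(S_k x_k)^T / Tr(S_k P_k),
   which is I - E_k; and Y_k = A X_k, so hat A_k = A (I - E_k).  For the norm,
   E_k v = (I - S_k P_k / Tr(S_k P_k)) (S_k v) and the projector S_k does not
   increase the Euclidean norm. *)

Section Trajectory.
Variables (R : pzRingType) (n : nat) (A : 'M[R]_n) (x0 : 'cV[R]_n).

Lemma mulmx_Xmat_entry j (Q : 'M[R]_n) i (t : 'I_j.+1) :
  (Q *m Xmat A x0 j) i t = (Q *m traj A x0 t) i 0.
Proof. by rewrite !mxE; apply: eq_bigr => l _; rewrite mxE. Qed.

Lemma Ymat_Xmat j : Ymat A x0 j = A *m Xmat A x0 j.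
Proof.
by apply/matrixP => i t; rewrite mulmx_Xmat_entry [LHS]mxE /traj exprS -mulmxA.
Qed.

Lemma Xmat_fixedP j (Q : 'M[R]_n) :
  Q *m Xmat A x0 j = Xmat A x0 j <->
  forall t, (t < j.+1)%N -> Q *m traj A x0 t = traj A x0 t.
Proof.
split=> [QX t ht | Qtraj].
  apply/matrixP => i c; rewrite (ord1 c).
  have := congr1 (fun M : 'M_(n, j.+1) => M i (Ordinal ht)) QX.
  by rewrite /= mulmx_Xmat_entry mxE /= => ->; rewrite mxE.
by apply/matrixP => i t; rewrite mulmx_Xmat_entry Qtraj // [RHS]mxE.
Qed.

Lemma Xmat_fixedS j (Q : 'M[R]_n) :
  Q *m Xmat A x0 j.+1 = Xmat A x0 j.+1 <->
  Q *m Xmat A x0 j = Xmat A x0 j /\ Q *m traj A x0 j.+1 = traj A x0 j.+1.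
Proof.
rewrite !Xmat_fixedP; split=> [Qtraj | [Qtraj Qlast] t].
  by split=> [t ht|]; apply: Qtraj; rewrite ltnS // ltnW.
by rewrite ltnS leq_eqVlt => /predU1P[->|]; [|apply: Qtraj].
Qed.

End Trajectory.

Lemma mxtrace_mul_outer (R : comPzRingType) n (M : 'M[R]_n) (x : 'cV[R]_n) :
  \tr (M *m (x *m x^T)) = (x^T *m M *m x) 0 0.
Proof. by rewrite mulmxA mxtrace_mulC -mulmxA [LHS]big_ord1 mulmxA. Qed.

Lemma pinv_proj_unique (R : comPzRingType) m n (M : 'M[R]_(m, n))
    (Mp : 'M[R]_(n, m)) (Pi : 'M[R]_m) :
  is_MP_pinv M Mp -> Pi^T = Pi -> Pi *m M = M -> M *m Mp *m Pi = Pi ->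
  M *m Mp = Pi.
Proof.
move=> [_ _ MMpT _] PiT PiM MMpPi.
have PiMMp : Pi *m (M *m Mp) = M *m Mp by rewrite mulmxA PiM.
by rewrite -MMpT -PiMMp trmx_mul MMpT PiT MMpPi.
Qed.

Section EconSVD.
Variables (R : numFieldType) (m n r : nat) (M : 'M[R]_(m, n)).
Variables (U : 'M[R]_(m, r)) (sigma : 'rV[R]_r) (V : 'M[R]_(n, r)).
Hypothesis svdM : econ_svd M U sigma V.

Lemma econ_svd_left : U = M *m (V *m diag_mx (\row_i (sigma 0 i)^-1)).
Proof.
have [-> _ VV sigma_gt0] := svdM.
have DDinv : diag_mx sigma *m diag_mx (\row_i (sigma 0 i)^-1) = 1%:M.
  apply/matrixP => i j; rewrite mul_diag_mx !mxE.
  case: eqVneq => [->|]; last by rewrite !mulr0n mulr0.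
  by rewrite !mulr1n mulfV // gt_eqF.
by rewrite -!mulmxA (mulmxA V^T) VV mul1mx DDinv mulmx1.
Qed.

Lemma econ_svd_fixed (Q : 'M[R]_m) : Q *m M = M -> Q *m U = U.
Proof. by move=> QM; rewrite econ_svd_left mulmxA QM. Qed.

Lemma econ_svd_proj : U *m U^T *m M = M.
Proof.
by case: svdM => -> UU _ _; rewrite !mulmxA -(mulmxA U) UU mulmx1.
Qed.

End EconSVD.

Section GramSchmidtStep.
Variables (R : fieldType) (n r : nat) (U : 'M[R]_(n, r)).
Hypothesis UU : U^T *m U = 1%:M.

Local Notation S := (1%:M - U *m U^T).

Lemma trmx_compl : S^T = S.
Proof. by rewrite linearB /= trmx1 trmx_mul trmxK. Qed.

Lemma compl_mulU : S *m U = 0.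
Proof. by rewrite mulmxBl mul1mx -mulmxA UU mulmx1 subrr. Qed.

Lemma compl_idem : S *m S = S.
Proof. by rewrite [in LHS]mulmxBr mulmx1 mulmxA compl_mulU mul0mx subr0. Qed.

Definition proj_extend (x : 'cV[R]_n) : 'M[R]_n :=
  U *m U^T + (\tr (S *m (x *m x^T)))^-1 *: (S *m x *m (S *m x)^T).

Lemma proj_extend_sym x : (proj_extend x)^T = proj_extend x.
Proof. by rewrite /proj_extend linearD linearZ /= !trmx_mul !trmxK. Qed.

Lemma proj_extend_mulU x : proj_extend x *m U = U.
Proof.
rewrite mulmxDl -mulmxA UU mulmx1 -scalemxAl trmx_mul trmx_compl -!mulmxA.
by rewrite compl_mulU !mulmx0 scaler0 addr0.
Qed.

Lemma proj_extend_fixed x : \tr (S *m (x *m x^T)) != 0 -> proj_extend x *m x = x.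
Proof.
move=> c_neq0.
have Sxx : (S *m x)^T *m x = (\tr (S *m (x *m x^T)))%:M.
  by rewrite mxtrace_mul_outer trmx_mul trmx_compl -mx11_scalar.
rewrite mulmxDl -scalemxAl -(mulmxA (S *m x)) Sxx mul_mx_scalar scalerA.
by rewrite mulVf // scale1r mulmxBl mul1mx -mulmxA addrC subrK.
Qed.

Lemma mulmx_proj_extend (Q : 'M[R]_n) x :
  Q *m U = U -> Q *m x = x -> Q *m proj_extend x = proj_extend x.
Proof.
move=> QU Qx; have QSx : Q *m (S *m x) = S *m x.
  by rewrite mulmxBl mul1mx mulmxBr Qx !mulmxA QU.
by rewrite /proj_extend mulmxDr mulmxA QU -scalemxAr (mulmxA Q) QSx.
Qed.

Lemma proj_extendE x :
  1%:M - (1%:M - (\tr (S *m (x *m x^T)))^-1 *: (S *m (x *m x^T))) *m S =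
  proj_extend x.
Proof.
rewrite /proj_extend; set c := \tr _.
rewrite trmx_mul trmx_compl mulmxBl mul1mx -scalemxAl !mulmxA.
by rewrite opprB addrCA subKr addrC.
Qed.

End GramSchmidtStep.

Section EuclideanNorm.
Variable R : realType.
Local Open Scope classical_set_scope.

Lemma norm2E n (v : 'cV[R]_n) : norm2 v = Num.sqrt ((v^T *m v) 0 0).
Proof.
by rewrite /norm2 mxE; congr Num.sqrt; apply: eq_bigr => i _; rewrite mxE.
Qed.

Lemma trmx_mul_self_ge0 n (v : 'cV[R]_n) : 0 <= (v^T *m v) 0 0.
Proof. by rewrite mxE; apply: sumr_ge0 => i _; rewrite mxE -expr2 sqr_ge0. Qed.

Lemma norm2_0 n : norm2 (0 : 'cV[R]_n) = 0.
Proof. by rewrite norm2E mulmx0 mxE sqrtr0. Qed.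

Lemma norm2_proj_le n (S : 'M[R]_n) (v : 'cV[R]_n) :
  S^T = S -> S *m S = S -> norm2 (S *m v) <= norm2 v.
Proof.
move=> ST SS; set T := 1%:M - S.
have TT : T^T *m T = T.
  have -> : T^T = T by rewrite /T linearB /= trmx1 ST.
  by rewrite /T mulmxBl mul1mx mulmxBr mulmx1 SS subrr subr0.
have split_v : v^T *m v = (S *m v)^T *m (S *m v) + (T *m v)^T *m (T *m v).
  rewrite !trmx_mul !mulmxA -!(mulmxA v^T) ST SS TT.
  by rewrite -mulmxDr -mulmxDl /T addrC subrK mul1mx.
rewrite !norm2E ler_sqrt ?trmx_mul_self_ge0 // split_v [in X in _ <= X]mxE lerDl.
exact: trmx_mul_self_ge0.
Qed.

Lemma abs_coord_le_norm2 n (v : 'cV[R]_n) j : `|v j 0| <= norm2 v.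
Proof.
have sq_ge0 i : 0 <= v i 0 ^+ 2 by exact: sqr_ge0.
rewrite /norm2 -sqrtr_sqr ler_sqrt ?sumr_ge0 // (bigD1 j) //= lerDl.
exact: sumr_ge0.
Qed.

Lemma norm2_mulmx_le m n (M : 'M[R]_(m, n)) (v : 'cV[R]_n) : norm2 v <= 1 ->
  norm2 (M *m v) <= Num.sqrt (\sum_i (\sum_j `|M i j|) ^+ 2).
Proof.
move=> v_le1; rewrite /norm2 ler_sqrt; last first.
  by apply: sumr_ge0 => i _; apply: sqr_ge0.
apply: ler_sum => i _.
have Mv_le : `|(M *m v) i 0| <= \sum_j `|M i j|.
  rewrite mxE; apply: le_trans (ler_norm_sum _ _ _) _; apply: ler_sum => j _.
  by rewrite normrM ler_piMr // (le_trans (abs_coord_le_norm2 v j)).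
by rewrite -real_normK ?num_real // lerXn2r ?nnegrE // (le_trans _ Mv_le).
Qed.

Lemma spec_norm_has_sup m n (M : 'M[R]_(m, n)) :
  has_sup [set norm2 (M *m v) | v in [set v : 'cV[R]_n | norm2 v <= 1]].
Proof.
split; first by exists (norm2 (M *m 0)), 0; rewrite //= norm2_0.
exists (Num.sqrt (\sum_i (\sum_j `|M i j|) ^+ 2)) => _ [v v_le1 <-].
exact: norm2_mulmx_le.
Qed.

Lemma spec_norm_mulmx_contraction m n p (B : 'M[R]_(m, n)) (S : 'M[R]_(n, p)) :
  (forall v, norm2 (S *m v) <= norm2 v) -> spec_norm (B *m S) <= spec_norm B.
Proof.
move=> S_le; apply: ge_sup.
  by exists (norm2 (B *m S *m 0)), 0; rewrite //= norm2_0.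
move=> _ [v v_le1 <-]; apply: sup_upper_bound; first exact: spec_norm_has_sup.
by exists (S *m v); rewrite ?mulmxA //= (le_trans (S_le v)).
Qed.

End EuclideanNorm.

Theorem theorem1 (R : realType) (n : nat) (A : 'M[R]_n) (x0 : 'cV[R]_n) (k : nat)
  (hk1 : (1 <= k)%N) (hkn : (k < n)%N)
  (r : nat) (U : 'M[R]_(n, r)) (sigma : 'rV[R]_r) (V : 'M[R]_(k.-1.+1, r))
  (hsvd : econ_svd (Xmat A x0 k.-1) U sigma V)
  (Xkp : 'M[R]_(k.+1, n)) (hXkp : is_MP_pinv (Xmat A x0 k) Xkp) :
  let S := 1%:M - U *m U^T in
  let P := traj A x0 k *m (traj A x0 k)^T in
  \tr (S *m P) != 0 ->
  let B := 1%:M - (\tr (S *m P))^-1 *: (S *m P) in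
  let E := B *m S in
  Ymat A x0 k *m Xkp = A *m (1%:M - E) /\ spec_norm E <= spec_norm B.
Proof.
case: k hk1 hkn V hsvd Xkp hXkp => [//|j] _ _ /= V svdX Xkp pinvX c_neq0.
have [_ UU _ _] := svdX.
set x := traj A x0 j.+1; set Pi := proj_extend U x.
have Pi_fixed : Pi *m Xmat A x0 j.+1 = Xmat A x0 j.+1.
  apply/Xmat_fixedS; split; last exact: proj_extend_fixed.
  rewrite -{1}(econ_svd_proj svdX) !mulmxA proj_extend_mulU //.
  exact: econ_svd_proj svdX.
have /Xmat_fixedS [MMp_fixedX MMp_fixedx] :
    Xmat A x0 j.+1 *m Xkp *m Xmat A x0 j.+1 = Xmat A x0 j.+1 by case: pinvX.
have MMpE : Xmat A x0 j.+1 *m Xkp = Pi.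
  apply: pinv_proj_unique pinvX (proj_extend_sym _ _) Pi_fixed _.
  exact: mulmx_proj_extend (econ_svd_fixed svdX MMp_fixedX) MMp_fixedx.
split.
  by rewrite Ymat_Xmat -mulmxA MMpE; congr (_ *m _); apply/esym/proj_extendE.
apply: spec_norm_mulmx_contraction => v.
by apply: norm2_proj_le; [apply: trmx_compl | apply: compl_idem].
Qed.
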